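(* Consider the problem, algorithm and notation described in the context, with each $f_i$ convex and $l$-smooth, and DCGS run with parameters $\theta_k=\alpha_k=1$, $\eta_k=2\|L\|$, $\tau_k=\|L\|$, $e_i^k=\frac{\|L\|\max(\|\mathbf{x}^0-\mathbf{x}^*\|^2,\|\mathbf{y}^0\|^2)}{mN}$. Then to obtain an output with $F(\overline{\mathbf{x}}_N)-F(\mathbf{x}^* )\le\epsilon$, the number of communication rounds and the number of LO calls performed by each agent are respectively bounded by $$\mathcal{O}\left(\frac{\|L\|\max(\|\mathbf{x}^0-\mathbf{x}^*\|^2,\|\mathbf{y}^0\|^2)}{\epsilon}\right)\quad\text{and}\quad \mathcal{O}\left(\frac{m\|L\|(l+\|L\|)\max(\|\mathbf{x}^0-\mathbf{x}^*\|^2,\|\mathbf{y}^0\|^2)}{\epsilon^2}\right).$$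
   Context: Let $G=(V,E)$ be a connected undirected graph with $V=\{1,\dots,m\}$ and $N(i)=\{j:(i,j)\in E\}$. Its Laplacian $L\in\mathbb{R}^{m\times m}$ has $L_{ii}=|N(i)|$, $L_{ij}=-1$ if $i\ne j$ and $(i,j)\in E$, and $L_{ij}=0$ otherwise; $\|L\|$ is its spectral norm. Agent $i$ holds $f_i:\mathbb{R}^d\to\mathbb{R}$; each $f_i$ is $u$-strongly convex ($u\ge 0$) and $l$-smooth, i.e. $\frac{u}{2}\|y-x\|^2\le f_i(y)-f_i(x)-\nabla f_i(x)^T(y-x)\le\frac{l}{2}\|y-x\|^2$. $X\subset\mathbb{R}^d$ is a nonempty compact convex set accessed through a linear oracle (LO) returning $\arg\min_{s\in X}\langle g,s\rangle$. For $\mathbf{x}=(x_1,\dots,x_m)\in X^m$ let $F(\mathbf{x})=\sum_{i=1}^m f_i(x_i)$, and let $\mathbf{x}^*$ be an optimal solution of $\min_{\mathbf{x}\in X^m}F(\mathbf{x})$ subject to $(L\otimes I_d)\mathbf{x}=0$. All norms on $\mathbb{R}^{md}$ are Euclidean. Procedure $CG(f,x,w,\eta,e)$ (Frank–Wolfe on $\phi(z)=\langle w,z\rangle+f(z)+\frac{\eta}{2}\|z-x\|^2$ over $X$): pick $z^0\in X$; for $t=0,1,\dots$: let $g^t=\nabla f(z^t)+w+\eta(z^t-x)$ and $s^t=\arg\min_{s\in X}\langle g^t,s\rangle$ (one LO call); if $\langle g^t,z^t-s^t\rangle\le e$ return $z^t$; otherwise $z^{t+1}=(1-\gamma_t)z^t+\gamma_t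 s^t$ with $\gamma_t=\frac{2}{t+2}$ or chosen by line search. Algorithm DCGS: given $N$, $\mathbf{x}^0=\mathbf{x}^{-1}\in X^m$, $\mathbf{y}^0\in\mathbb{R}^{md}$ and parameters $\{\alpha_k\},\{\tau_k\},\{\eta_k\},\{\theta_k\},\{e_i^k\}$. For $k=1,\dots,N$, every agent $i$ computes: $\tilde x_i^k=\alpha_k(x_i^{k-1}-x_i^{k-2})+x_i^{k-1}$ and broadcasts it to its neighbors; $v_i^k=\sum_{j\in N(i)\cup\{i\}}L_{ij}\tilde x_j^k$; $y_i^k=y_i^{k-1}+\frac{1}{\tau_k}v_i^k$ and broadcasts it to its neighbors; $w_i^k=\sum_{j\in N(i)\cup\{i\}}L_{ij}y_j^k$; $x_i^k=CG(f_i,x_i^{k-1},w_i^k,\eta_k,e_i^k)$. Thus each outer iteration uses a constant number (two) of communication rounds. Output $\overline{\mathbf{x}}_N=(\sum_{k=1}^N\theta_k)^{-1}\sum_{k=1}^N\theta_k\mathbf{x}^k$. *)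

(* R : realType, vectors of R^d are
   row vectors 'rV[R]_d, stacked vectors of R^{md} are m x d matrices whose
   i-th row is the block x_i. *)
From mathcomp Require Import all_boot all_order all_algebra.
From mathcomp Require Import all_classical all_reals all_analysis.
Import Order.TTheory GRing.Theory Num.Theory.

Set Implicit Arguments.
Unset Strict Implicit.
Unset Printing Implicit Defensive.

Local Open Scope ring_scope.
Local Open Scope classical_set_scope.

Section Defs.
Variable R : realType.

Definition dotv {d : nat} (u v : 'rV[R]_d) : R := \sum_(j < d) u ord0 j * v ord0 j.

Definition sqnorm {p q : nat} (M : 'M[R]_(p, q)) : R :=
  \sum_(i < p) \sum_(j < q) M i j ^+ 2.

Definition enorm {p q : nat} (M : 'M[R]_(p, q)) : R := Num.sqrt (sqnorm M).

Definition specnorm {m : nat} (A : 'M[R]_m) : R :=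
  sup [set enorm (A *m v) | v in [set v : 'cV[R]_m | enorm v = 1]].

Definition laplacian {m : nat} (E : rel 'I_m) : 'M[R]_m :=
  \matrix_(i, j) (if i == j then (#|[set k | E i k]|)%:R
                  else if E i j then -1 else 0).

Definition connected_graph {m : nat} (E : rel 'I_m) : Prop :=
  (forall i, ~~ E i i) /\ (forall i j, E i j = E j i) /\
  (forall i j, connect E i j).

Definition compact_set {d : nat} (X : set 'rV[R]_d) : Prop :=
  compact (X : set 'rV[R^o]_d).

Definition strcvx_smooth {d : nat} (u l : R) (f : 'rV[R]_d -> R)
  (g : 'rV[R]_d -> 'rV[R]_d) : Prop :=
  forall x y, u / 2 * sqnorm (y - x) <= f y - f x - dotv (g x) (y - x)
              <= l / 2 * sqnorm (y - x).

Definition linear_oracle {d : nat} (X : set 'rV[R]_d)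
  (lo : 'rV[R]_d -> 'rV[R]_d) : Prop :=
  forall g, X (lo g) /\ forall s, X s -> dotv g (lo g) <= dotv g s.

Definition inXm {m d : nat} (X : set 'rV[R]_d) (x : 'M[R]_(m, d)) : Prop :=
  forall i, X (row i x).

Definition Fobj {m d : nat} (f : 'I_m -> 'rV[R]_d -> R) (x : 'M[R]_(m, d)) : R :=
  \sum_(i < m) f i (row i x).

(* x* optimal for min_{x in X^m} F(x) s.t. (L (x) I_d) x = 0 *)
Definition optimal_sol {m d : nat} (X : set 'rV[R]_d) (L : 'M[R]_m)
  (f : 'I_m -> 'rV[R]_d -> R) (xs : 'M[R]_(m, d)) : Prop :=
  inXm X xs /\ L *m xs = 0 /\
  forall x, inXm X x -> L *m x = 0 -> Fobj f xs <= Fobj f x.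

Definition cg_phi {d : nat} (f : 'rV[R]_d -> R) (x w : 'rV[R]_d) (eta : R)
  (z : 'rV[R]_d) : R :=
  dotv w z + f z + eta / 2 * sqnorm (z - x).

Definition cg_grad {d : nat} (gf : 'rV[R]_d -> 'rV[R]_d) (x w : 'rV[R]_d) (eta : R)
  (z : 'rV[R]_d) : 'rV[R]_d :=
  gf z + w + eta *: (z - x).

(* A step-size rule: given the agent i, eta, the centre x, the linear term w,
   the iteration counter t, the current iterate z and the LO answer s, it
   returns gamma_t. *)
Definition step_rule (m d : nat) :=
  'I_m -> R -> 'rV[R]_d -> 'rV[R]_d -> nat -> 'rV[R]_d -> 'rV[R]_d -> R.

Definition admissible_step {m d : nat} (f : 'I_m -> 'rV[R]_d -> R)
  (gam : step_rule m d) : Prop :=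
  (forall i eta x w t z s, gam i eta x w t z s = 2 / (t%:R + 2)) \/
  (forall i eta x w t z s,
     0 <= gam i eta x w t z s <= 1 /\
     forall c : R, 0 <= c <= 1 ->
       cg_phi (f i) x w eta ((1 - gam i eta x w t z s) *: z + gam i eta x w t z s *: s)
       <= cg_phi (f i) x w eta ((1 - c) *: z + c *: s)).

Fixpoint cg_seq {m d : nat} (i : 'I_m) (gf : 'rV[R]_d -> 'rV[R]_d)
  (lo : 'rV[R]_d -> 'rV[R]_d) (gam : step_rule m d)
  (x w : 'rV[R]_d) (eta : R) (z0 : 'rV[R]_d) (t : nat) : 'rV[R]_d :=
  match t with
  | 0 => z0
  | t'.+1 =>
      let z := cg_seq i gf lo gam x w eta z0 t' in
      let s := lo (cg_grad gf x w eta z) in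
      let c := gam i eta x w t' z s in
      (1 - c) *: z + c *: s
  end.

Definition cg_gap {m d : nat} (i : 'I_m) (gf : 'rV[R]_d -> 'rV[R]_d)
  (lo : 'rV[R]_d -> 'rV[R]_d) (gam : step_rule m d)
  (x w : 'rV[R]_d) (eta : R) (z0 : 'rV[R]_d) (t : nat) : R :=
  let z := cg_seq i gf lo gam x w eta z0 t in
  let g := cg_grad gf x w eta z in
  dotv g (z - lo g).

(* CG(f_i, x, w, eta, e) started at z0 stops at iteration T (i.e. returns z^T
   after exactly T+1 LO calls) *)
Definition cg_stops_at {m d : nat} (i : 'I_m) (gf : 'rV[R]_d -> 'rV[R]_d)
  (lo : 'rV[R]_d -> 'rV[R]_d) (gam : step_rule m d)
  (x w : 'rV[R]_d) (eta e : R) (z0 : 'rV[R]_d) (T : nat) : Prop :=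
  cg_gap i gf lo gam x w eta z0 T <= e /\
  forall t, (t < T)%N -> e < cg_gap i gf lo gam x w eta z0 t.

(* A run of DCGS for N outer iterations: xs k = x^k, ys k = y^k, T k i = index
   at which the k-th CG call of agent i stops (it uses T k i + 1 LO calls).
   x^{-1} = x^0 is encoded by truncated subtraction (k-2 = 0 for k = 1).
   zinit k i is the starting point z^0 picked in the k-th CG call of agent i. *)
Definition dcgs_run {m d : nat} (L : 'M[R]_m) (gf : 'I_m -> 'rV[R]_d -> 'rV[R]_d)
  (lo : 'rV[R]_d -> 'rV[R]_d) (gam : step_rule m d)
  (zinit : nat -> 'I_m -> 'rV[R]_d)
  (alpha tau eta : nat -> R) (e : nat -> 'I_m -> R)
  (N : nat) (x0 y0 : 'M[R]_(m, d))
  (xs ys : nat -> 'M[R]_(m, d)) (T : nat -> 'I_m -> nat) : Prop :=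
  xs 0%N = x0 /\ ys 0%N = y0 /\
  forall k, (1 <= k <= N)%N ->
    let xt := alpha k *: (xs (k - 1)%N - xs (k - 2)%N) + xs (k - 1)%N in
    let v := L *m xt in
    ys k = ys (k - 1)%N + (tau k)^-1 *: v /\
    let w := L *m ys k in
    forall i : 'I_m,
      cg_stops_at i (gf i) lo gam (row i (xs (k - 1)%N)) (row i w) (eta k) (e k i)
        (zinit k i) (T k i) /\
      row i (xs k) =
        cg_seq i (gf i) lo gam (row i (xs (k - 1)%N)) (row i w) (eta k) (zinit k i) (T k i).

Definition dcgs_output {m d : nat} (theta : nat -> R) (N : nat)
  (xs : nat -> 'M[R]_(m, d)) : 'M[R]_(m, d) :=
  (\sum_(1 <= k < N.+1) theta k)^-1 *: \sum_(1 <= k < N.+1) theta k *: xs k.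

Definition lo_calls {m : nat} (T : nat -> 'I_m -> nat) (N : nat) (i : 'I_m) : nat :=
  \sum_(1 <= k < N.+1) (T k i).+1.

End Defs.

(* DCGS is a linearized primal-dual method whose proximal steps are solved
   inexactly by Frank-Wolfe.  A CG output with gap at most e is an e-inexact
   minimizer of the eta-strongly convex proximal objective, so with
   eta = 2 tau = 2 ||L|| the potential
     ||L|| |x* - x^k|^2 + ||L||/2 |y^k|^2 + <y^k, L (x^k - x^(k-1))>
       + ||L||/2 |x^k - x^(k-1)|^2,
   which is nonnegative by Young's inequality, decreases by F(x^k) - F* - m e
   at each step; summing and using convexity of F for the average gives
   N F(xbar_N) - N F* <= 3/2 ||L|| D + N m e, hence N ~ 5/2 ||L|| D / eps.
   Inside each call, Frank-Wolfe on an (l + 2 ||L||)-smooth function over X has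
   gap at most e after O((l + ||L||) diam(X)^2 / e) iterations, which with
   e = ||L|| D / (m N) gives O(m ||L|| (l + ||L||) D / eps^2) LO calls. *)

From mathcomp Require Import all_boot all_order all_algebra.
From mathcomp Require Import all_classical all_reals all_analysis.
From mathcomp Require Import ring lra zify.
Import Order.TTheory GRing.Theory Num.Theory.
Local Open Scope ring_scope.
Local Open Scope classical_set_scope.
Set Implicit Arguments.
Unset Strict Implicit.
Unset Printing Implicit Defensive.

Section FrobeniusInnerProduct.
Variables (R : realType) (p q : nat).
Implicit Types (A B C : 'M[R]_(p, q)) (c : R).

Definition mxdot A B : R := \sum_i \sum_j A i j * B i j.

Lemma mxdotC A B : mxdot A B = mxdot B A.
Proof. by apply: eq_bigr => i _; apply: eq_bigr => j _; rewrite mulrC. Qed.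

Lemma mxdotDl A B C : mxdot (A + B) C = mxdot A C + mxdot B C.
Proof.
rewrite /mxdot -big_split; apply: eq_bigr => i _.
by rewrite -big_split; apply: eq_bigr => j _; rewrite !mxE mulrDl.
Qed.

Lemma mxdotZl c A B : mxdot (c *: A) B = c * mxdot A B.
Proof.
rewrite /mxdot mulr_sumr; apply: eq_bigr => i _.
by rewrite mulr_sumr; apply: eq_bigr => j _; rewrite !mxE mulrA.
Qed.

Lemma mxdotNl A B : mxdot (- A) B = - mxdot A B.
Proof. by rewrite -scaleN1r mxdotZl mulN1r. Qed.

Lemma mxdotBl A B C : mxdot (A - B) C = mxdot A C - mxdot B C.
Proof. by rewrite mxdotDl mxdotNl. Qed.

Lemma mxdotDr A B C : mxdot A (B + C) = mxdot A B + mxdot A C.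
Proof. by rewrite mxdotC mxdotDl !(mxdotC A). Qed.

Lemma mxdotZr c A B : mxdot A (c *: B) = c * mxdot A B.
Proof. by rewrite mxdotC mxdotZl mxdotC. Qed.

Lemma mxdotNr A B : mxdot A (- B) = - mxdot A B.
Proof. by rewrite mxdotC mxdotNl mxdotC. Qed.

Lemma mxdotBr A B C : mxdot A (B - C) = mxdot A B - mxdot A C.
Proof. by rewrite mxdotDr mxdotNr. Qed.

Lemma mxdot0r A : mxdot A 0 = 0.
Proof. by rewrite -(scale0r 0) mxdotZr mul0r. Qed.

Lemma mxdot_sumr A (I : Type) (r : seq I) (P : pred I) (F : I -> 'M[R]_(p, q)) :
  mxdot A (\sum_(i <- r | P i) F i) = \sum_(i <- r | P i) mxdot A (F i).
Proof. exact: (big_morph _ (mxdotDr A) (mxdot0r A)). Qed.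

Lemma sqnormE A : sqnorm A = mxdot A A.
Proof. by apply: eq_bigr => i _; apply: eq_bigr => j _; rewrite expr2. Qed.

Lemma sqnorm_ge0 A : 0 <= sqnorm A.
Proof. by apply: sumr_ge0 => i _; apply: sumr_ge0 => j _; apply: sqr_ge0. Qed.

Lemma sqnorm0 : sqnorm (0 : 'M[R]_(p, q)) = 0.
Proof. by rewrite sqnormE mxdot0r. Qed.

Lemma sqnormD A B : sqnorm (A + B) = sqnorm A + 2 * mxdot A B + sqnorm B.
Proof. rewrite !sqnormE mxdotDl !mxdotDr (mxdotC B A); ring. Qed.

Lemma sqnormB A B : sqnorm (A - B) = sqnorm A - 2 * mxdot A B + sqnorm B.
Proof. rewrite !sqnormE mxdotBl !mxdotBr (mxdotC B A); ring. Qed.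

Lemma sqnormN A : sqnorm (- A) = sqnorm A.
Proof. by rewrite !sqnormE mxdotNl mxdotNr opprK. Qed.

Lemma sqnormZ c A : sqnorm (c *: A) = c ^+ 2 * sqnorm A.
Proof. by rewrite !sqnormE mxdotZl mxdotZr mulrA expr2. Qed.

Lemma sqnormBC A B : sqnorm (A - B) = sqnorm (B - A).
Proof. by rewrite -sqnormN opprB. Qed.

Lemma sqr_mxentry_le_sqnorm A i j : A i j ^+ 2 <= sqnorm A.
Proof.
have sum_ge_term (I : finType) (F : I -> R) (k : I) :
    (forall k', 0 <= F k') -> F k <= \sum_k' F k'.
  by move=> F0; rewrite (bigD1 k) //= lerDl sumr_ge0.
apply: le_trans (sum_ge_term _ _ i _); last first.
  by move=> i'; apply: sumr_ge0 => j' _; apply: sqr_ge0.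
exact: sum_ge_term _ _ j (fun _ => sqr_ge0 _).
Qed.

Lemma sqnorm_eq0 A : sqnorm A = 0 -> A = 0.
Proof.
move=> A0; apply/matrixP => i j; rewrite mxE.
apply/eqP; rewrite -sqrf_eq0 eq_le sqr_ge0 andbT -A0.
exact: sqr_mxentry_le_sqnorm.
Qed.

Lemma mxdot_Young c A B : 0 < c -> 2 * mxdot A B <= c * sqnorm A + c^-1 * sqnorm B.
Proof.
move=> c_gt0; rewrite -(ler_pM2l c_gt0) mulrDr [c * (c^-1 * _)]mulrA.
rewrite mulfV ?gt_eqF // mul1r.
have := sqnorm_ge0 (c *: A - B); rewrite sqnormB sqnormZ mxdotZl; lra.
Qed.

End FrobeniusInnerProduct.

Section RowsCols.
Variables (R : realType) (p q : nat).
Implicit Types (A B : 'M[R]_(p, q)).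

Lemma mxdot_rows A B : mxdot A B = \sum_i mxdot (row i A) (row i B).
Proof.
apply: eq_bigr => i _; rewrite /mxdot big_ord1.
by apply: eq_bigr => j _; rewrite !mxE.
Qed.

Lemma sqnorm_rows A : sqnorm A = \sum_i sqnorm (row i A).
Proof. by rewrite sqnormE mxdot_rows; apply: eq_bigr => i _; rewrite sqnormE. Qed.

Lemma sqnorm_cols A : sqnorm A = \sum_j sqnorm (col j A).
Proof.
rewrite /sqnorm exchange_big; apply: eq_bigr => j _.
by apply: eq_bigr => i _; rewrite big_ord1 !mxE.
Qed.

Lemma sqnormB_rows A B : sqnorm (A - B) = \sum_i sqnorm (row i A - row i B).
Proof. by rewrite sqnorm_rows; apply: eq_bigr => i _; rewrite linearB. Qed.

End RowsCols.

Lemma sqnorm_gt0_width (R : realType) (p q : nat) (A : 'M[R]_(p, q)) :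
  0 < sqnorm A -> (0 < q)%N.
Proof. by case: q A => // A; rewrite /sqnorm big1 ?ltxx // => i _; rewrite big_ord0. Qed.

Lemma dotvE (R : realType) (d : nat) (u v : 'rV[R]_d) : dotv u v = mxdot u v.
Proof. by rewrite /mxdot big_ord1. Qed.

Lemma mxdot_mulmx_sym (R : realType) (p q : nat) (L : 'M[R]_p) (A B : 'M[R]_(p, q)) :
  L^T = L -> mxdot (L *m A) B = mxdot A (L *m B).
Proof.
move=> L_sym; rewrite /mxdot.
under eq_bigr do under eq_bigr do rewrite mxE big_distrl.
under [RHS]eq_bigr do under eq_bigr do rewrite mxE big_distrr.
rewrite /= exchange_big [RHS]exchange_big; apply: eq_bigr => j _.
rewrite exchange_big; apply: eq_bigr => i _; apply: eq_bigr => k _.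
by rewrite -[in LHS]L_sym mxE /=; ring.
Qed.

Section SpectralNorm.
Variables (R : realType) (m : nat) (L : 'M[R]_m).

Lemma sqnorm_enorm (p q : nat) (A : 'M[R]_(p, q)) : sqnorm A = enorm A ^+ 2.
Proof. by rewrite /enorm sqr_sqrtr // sqnorm_ge0. Qed.

Lemma specnorm_ubound : has_ubound [set enorm (L *m v) | v in [set v : 'cV[R]_m | enorm v = 1]].
Proof.
pose B := \sum_i (\sum_k `|L i k|) ^+ 2.
exists (Num.sqrt B) => _ [v /= v1 <-].
rewrite /enorm ler_sqrt; last by apply: sumr_ge0 => i _; apply: sqr_ge0.
have v_le1 k : `|v k 0| <= 1.
  have : v k 0 ^+ 2 <= 1 by rewrite -(expr1n _ 2) -v1 -sqnorm_enorm sqr_mxentry_le_sqnorm.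
  by rewrite -ler_sqrt ?sqrtr1 ?sqrtr_sqr // ltr01.
apply: ler_sum => i _; rewrite big_ord1 -real_normK ?num_real //.
rewrite lerXn2r ?nnegrE ?sumr_ge0 // mxE; apply: le_trans (ler_norm_sum _ _ _) _.
by apply: ler_sum => k _; rewrite normrM ler_piMr.
Qed.

Lemma enorm_mulmx_le_specnorm (v : 'cV[R]_m) : enorm v = 1 -> enorm (L *m v) <= specnorm L.
Proof.
move=> v1; apply: sup_upper_bound; last by exists v.
by split; [exists (enorm (L *m v)); exists v | exact: specnorm_ubound].
Qed.

Lemma sqnorm_mulmx_col_le (v : 'cV[R]_m) : sqnorm (L *m v) <= specnorm L ^+ 2 * sqnorm v.
Proof.
have [v0|v_neq0] := eqVneq (sqnorm v) 0.
  by rewrite v0 mulr0 (sqnorm_eq0 v0) mulmx0 sqnorm0.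
set s := enorm v; have s_gt0 : 0 < s by rewrite sqrtr_gt0 lt_neqAle eq_sym v_neq0 sqnorm_ge0.
set u := s^-1 *: v; have u1 : enorm u = 1.
  rewrite /enorm sqnormZ [sqnorm v]sqnorm_enorm -/s exprVn mulVf ?sqrtr1 //.
  by rewrite expf_neq0 // gt_eqF.
have Lu_le : enorm (L *m u) <= specnorm L := enorm_mulmx_le_specnorm u1.
have v_su : v = s *: u by rewrite /u scalerA mulfV ?scale1r // gt_eqF.
clearbody u s; rewrite v_su -scalemxAr !sqnormZ mulrCA ler_wpM2l ?sqr_ge0 //.
rewrite [sqnorm u]sqnorm_enorm u1 expr1n mulr1 sqnorm_enorm.
by rewrite lerXn2r ?nnegrE ?sqrtr_ge0 // (le_trans (sqrtr_ge0 _) Lu_le).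
Qed.

Lemma sqnorm_mulmx_le (q : nat) (A : 'M[R]_(m, q)) :
  sqnorm (L *m A) <= specnorm L ^+ 2 * sqnorm A.
Proof.
rewrite !sqnorm_cols mulr_sumr; apply: ler_sum => j _.
have -> : col j (L *m A) = L *m col j A.
  by apply/matrixP => i k; rewrite !mxE; apply: eq_bigr => k' _; rewrite !mxE.
exact: sqnorm_mulmx_col_le.
Qed.

End SpectralNorm.

Section Laplacian.
Variables (R : realType) (m : nat) (E : rel 'I_m).

Lemma laplacian_sym : (forall i j, E i j = E j i) -> (laplacian R E)^T = laplacian R E.
Proof.
move=> E_sym; apply/matrixP => i j; rewrite !mxE.
by have [->|_] := eqVneq j i; rewrite // E_sym.
Qed.

Lemma specnorm_laplacian_ge1 : (1 < m)%N -> connected_graph E ->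
  1 <= specnorm (laplacian R E).
Proof.
move=> m_gt1 [_ [_ E_conn]].
pose i0 : 'I_m := Ordinal (ltn_trans (ltnSn 0) m_gt1).
have deg_gt0 : (0 < #|[set k | E i0 k]|)%N.
  apply/card_gt0P; have /connectP [[|k p] /= p_path p_last] := E_conn i0 (Ordinal m_gt1).
    by move/(congr1 val): p_last.
  by case/andP: p_path => E_i0k _; exists k; rewrite inE.
pose e0 : 'cV[R]_m := \col_k (k == i0)%:R.
have e0_unit : enorm e0 = 1.
  rewrite /enorm /sqnorm (bigD1 i0) //= big_ord1 !mxE eqxx expr1n big1 ?addr0 ?sqrtr1 //.
  by move=> k k_neq; rewrite big_ord1 !mxE (negbTE k_neq) expr0n.
have Le0_i0 : (laplacian R E *m e0) i0 0 = #|[set k | E i0 k]|%:R.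
  rewrite mxE (bigD1 i0) //= big1 ?addr0; first by rewrite !mxE !eqxx mulr1.
  by move=> k k_neq; rewrite !mxE (negbTE k_neq) mulr0.
apply: le_trans (enorm_mulmx_le_specnorm _ e0_unit).
rewrite -sqrtr1 ler_sqrt ?sqnorm_ge0 //.
apply: le_trans (sqr_mxentry_le_sqnorm _ i0 0).
by rewrite Le0_i0 -natrX ler1n expn_gt0 deg_gt0.
Qed.

End Laplacian.

Lemma compact_sqnorm_bounded (R : realType) (d : nat) (X : set 'rV[R]_d) :
  compact_set X -> exists Dl : R, 0 <= Dl /\ forall a b, X a -> X b -> sqnorm (a - b) <= Dl.
Proof.
move=> /compact_bounded [M [_ XM]].
pose B := `|M| + 1.
have entry_le x : X x -> forall i j, `|x i j| <= B.
  move=> Xx i j; apply: le_trans (XM B _ x Xx).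
    change (`|x i j| <= mx_norm x); rewrite mx_normrE.
    exact: (le_bigmax _ (fun ij : 'I_1 * 'I_d => `|x ij.1 ij.2|) (i, j)).
  by apply: le_lt_trans (ler_norm M) _; rewrite ltrDl.
exists (\sum_(i < 1) \sum_(j < d) (2 * B) ^+ 2); split.
  by apply: sumr_ge0 => i _; apply: sumr_ge0 => j _; apply: sqr_ge0.
move=> a b Xa Xb; apply: ler_sum => i _; apply: ler_sum => j _.
have B_ge0 : 0 <= B by rewrite addr_ge0.
rewrite !mxE -real_normK ?num_real // lerXn2r ?nnegrE ?mulr_ge0 //.
by rewrite mulr2n mulrDl mul1r (le_trans (ler_normB _ _)) ?lerD ?entry_le.
Qed.

Lemma strcvx_smooth_le (R : realType) (d : nat) (u l : R) f g : (0 < d)%N ->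
  @strcvx_smooth R d u l f g -> u <= l.
Proof.
move=> d_gt0 /(_ 0 (const_mx 1)) /andP [lb ub].
have y1 : 1 <= sqnorm (const_mx 1 - 0 : 'rV[R]_d).
  by apply: le_trans (sqr_mxentry_le_sqnorm _ 0 (Ordinal d_gt0)); rewrite !mxE subr0 expr1n.
have := le_trans lb ub; rewrite ler_pM2r; last by apply: lt_le_trans y1.
by rewrite ler_pM2r.
Qed.

Section ConvexSmooth.
Variables (R : realType) (d : nat) (l : R) (f : 'rV[R]_d -> R) (g : 'rV[R]_d -> 'rV[R]_d).
Hypothesis f_cvx_smooth : strcvx_smooth 0 l f g.

Lemma cvx_linearization_le z y : f z + mxdot (g z) (y - z) <= f y.
Proof. have /andP [lb _] := f_cvx_smooth z y; rewrite mul0r dotvE in lb; lra. Qed.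

Lemma smooth_quadratic_ub z y : f y <= f z + mxdot (g z) (y - z) + l / 2 * sqnorm (y - z).
Proof. have /andP [_ ub] := f_cvx_smooth z y; rewrite dotvE in ub; lra. Qed.

Section ProximalObjective.
Variables (x w : 'rV[R]_d) (eta : R).

Local Notation phi := (cg_phi f x w eta).
Local Notation grad := (cg_grad g x w eta).

Lemma mxdot_cg_grad z v :
  mxdot (grad z) v = mxdot (g z) v + mxdot w v + eta * mxdot (z - x) v.
Proof. by rewrite /cg_grad 2!mxdotDl mxdotZl. Qed.

Lemma cg_phi_conv_le z s c :
  phi ((1 - c) *: z + c *: s) <=
  phi z + c * mxdot (grad z) (s - z) + (l + eta) / 2 * (c ^+ 2 * sqnorm (s - z)).
Proof.
have conv_shift : (1 - c) *: z + c *: s = z + c *: (s - z).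
  by rewrite scalerBl scale1r scalerBr addrAC addrA.
have := smooth_quadratic_ub z ((1 - c) *: z + c *: s).
rewrite /cg_phi !dotvE mxdot_cg_grad conv_shift [z + _ - z]addrAC subrr add0r.
by rewrite [z + _ - x]addrAC (sqnormD (z - x)) (mxdotDr w z) !mxdotZr sqnormZ; lra.
Qed.

Lemma cg_phi_strong_cvx z y :
  phi z + mxdot (grad z) (y - z) + eta / 2 * sqnorm (y - z) <= phi y.
Proof.
have := cvx_linearization_le z y; rewrite /cg_phi.
have -> : y - x = (z - x) + (y - z) by rewrite [RHS]addrC addrA subrK.
by rewrite !dotvE mxdot_cg_grad (sqnormD (z - x)) (mxdotBr w); lra.
Qed.

End ProximalObjective.
End ConvexSmooth.

Lemma exists_nat_gt_le (R : realType) (x : R) : 0 <= x ->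
  exists N : nat, [/\ (0 < N)%N, x < N%:R & N%:R <= x + 1].
Proof.
move=> x_ge0; exists (Num.truncn x).+1; split => //; first exact: truncnS_gt.
by rewrite -natr1 lerD2r truncn_le.
Qed.

Lemma open_loop_rate_step (R : realType) (u C : R) : 0 <= u -> 0 <= C ->
  (1 - 2 / (u + 2)) * (4 * C / (u + 2)) + (2 / (u + 2)) ^+ 2 * C <= 4 * C / (u + 3).
Proof.
move=> u_ge0 C_ge0.
have [u2_neq0 u3_neq0] : u + 2 != 0 /\ u + 3 != 0 by split; rewrite gt_eqF //; lra.
have -> : (1 - 2 / (u + 2)) * (4 * C / (u + 2)) + (2 / (u + 2)) ^+ 2 * C =
    4 * C / (u + 3) - 4 * C / ((u + 2) ^+ 2 * (u + 3)).
  by field; rewrite u2_neq0 u3_neq0.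
rewrite gerBl divr_ge0 ?mulr_ge0 ?sqr_ge0 //; lra.
Qed.

Lemma window_descent_le (R : realType) (A C e : R) : 1 <= A -> 0 <= C -> 0 < e ->
  A * (e / (A + 1) - 4 * C / (A + 2) ^+ 2) <= 4 * C / (A + 2) -> (A + 2) * e <= 16 * C.
Proof.
move=> A_ge1 C_ge0 e_gt0.
have [A1_neq0 A2_neq0] : A + 1 != 0 /\ A + 2 != 0 by split; rewrite gt_eqF //; lra.
have den_gt0 : 0 < (A + 1) * (A + 2) ^+ 2 by rewrite mulr_gt0 ?exprn_gt0 //; lra.
rewrite -subr_le0.
have -> : A * (e / (A + 1) - 4 * C / (A + 2) ^+ 2) - 4 * C / (A + 2) =
    (A * e * (A + 2) ^+ 2 - 4 * A * C * (A + 1) - 4 * C * (A + 1) * (A + 2))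
    / ((A + 1) * (A + 2) ^+ 2).
  by field; rewrite A1_neq0 A2_neq0.
rewrite pmulr_lle0 ?invr_gt0 // => num_le0.
have : 0 < A * (A + 2) by rewrite mulr_gt0 //; lra.
have : 0 <= C * (A ^+ 2 + 2 * A - 1) by rewrite mulr_ge0 //; nra.
rewrite !expr2 in num_le0 *; nra.
Qed.

Section FrankWolfe.
Variables (R : realType) (m d : nat) (X : set 'rV[R]_d) (f : 'I_m -> 'rV[R]_d -> R)
  (gf : 'I_m -> 'rV[R]_d -> 'rV[R]_d) (l : R) (lo : 'rV[R]_d -> 'rV[R]_d).
Hypothesis f_cvx_smooth : forall i, strcvx_smooth 0 l (f i) (gf i).
Hypothesis lo_X : linear_oracle X lo.

Definition fw_gap i x w eta (z : 'rV[R]_d) :=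
  let g := cg_grad (gf i) x w eta z in mxdot g (z - lo g).

Lemma cg_gapE gam i x w eta z0 t :
  cg_gap i (gf i) lo gam x w eta z0 t = fw_gap i x w eta (cg_seq i (gf i) lo gam x w eta z0 t).
Proof. by rewrite /cg_gap /fw_gap dotvE. Qed.

Lemma cg_phi_le_gap i x w eta z y : X y ->
  cg_phi (f i) x w eta z + eta / 2 * sqnorm (y - z)
  <= cg_phi (f i) x w eta y + fw_gap i x w eta z.
Proof.
move=> Xy; have [_ /(_ y Xy)] := lo_X (cg_grad (gf i) x w eta z).
have := cg_phi_strong_cvx (f_cvx_smooth i) x w eta z y.
by rewrite /fw_gap !dotvE !mxdotBr; lra.
Qed.

Hypothesis X_convex : convex_set X.
Variable gam : step_rule R m d.
Hypothesis gam_admissible : admissible_step f gam.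
Variable Dl : R.
Hypothesis X_sqdiam : forall a b, X a -> X b -> sqnorm (a - b) <= Dl.

Lemma convex_set_conv (c : R) (a b : 'rV[R]_d) : 0 <= c <= 1 -> X a -> X b ->
  X ((1 - c) *: a + c *: b).
Proof.
move=> /andP [c_ge0 c_le1] Xa Xb.
have := X_convex (Itv01 c_ge0 c_le1) (mem_set Xb) (mem_set Xa).
by rewrite inE /= /conv /= addrC.
Qed.

Lemma open_loop_step_in01 (t : nat) : 0 <= 2 / (t%:R + 2 : R) <= 1.
Proof. by rewrite divr_ge0 ?addr_ge0 //= ler_pdivrMr ?ltr_wpDl // mul1r lerDr. Qed.

Lemma step_rule_in01 i eta x w t z s : 0 <= gam i eta x w t z s <= 1.
Proof.
case: gam_admissible => [->|line_search]; first exact: open_loop_step_in01.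
by case: (line_search i eta x w t z s).
Qed.

Section Iterates.
Variables (i : 'I_m) (x w : 'rV[R]_d) (eta : R) (z0 : 'rV[R]_d).
Hypotheses (eta_ge0 : 0 <= eta) (l_eta_ge0 : 0 <= l + eta) (z0_X : X z0).

Local Notation z := (cg_seq i (gf i) lo gam x w eta z0).
Local Notation phi := (cg_phi (f i) x w eta).
Local Notation gap t := (fw_gap i x w eta (z t)).
Local Notation C := ((l + eta) / 2 * Dl).

Let C_ge0 : 0 <= C.
Proof. by rewrite mulr_ge0 ?divr_ge0 // (le_trans (sqnorm_ge0 _) (X_sqdiam z0_X z0_X)). Qed.

Lemma cg_seq_in t : X (z t).
Proof.
elim: t => [|t IH] //=; apply: convex_set_conv => //; first exact: step_rule_in01.
by have [] := lo_X (cg_grad (gf i) x w eta (z t)).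
Qed.

Lemma cg_seq_descent t :
  phi (z t.+1) <= phi (z t) - 2 / (t%:R + 2) * gap t + (2 / (t%:R + 2)) ^+ 2 * C.
Proof.
rewrite /=; set g := cg_grad (gf i) x w eta (z t); set s := lo g.
set c := 2 / (t%:R + 2 : R).
have Xs : X s by have [] := lo_X g.
have open_loop : phi ((1 - c) *: z t + c *: s) <= phi (z t) - c * gap t + c ^+ 2 * C.
  apply: le_trans (cg_phi_conv_le (f_cvx_smooth i) x w eta (z t) s c) _.
  have -> : mxdot g (s - z t) = - gap t by rewrite /fw_gap -/g -/s !mxdotBr opprB.
  have : (l + eta) / 2 * (c ^+ 2 * sqnorm (s - z t)) <= c ^+ 2 * C.
    rewrite mulrCA ler_wpM2l ?sqr_ge0 // ler_wpM2l ?X_sqdiam //; last exact: cg_seq_in.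
    by rewrite divr_ge0.
  lra.
case: gam_admissible => [->|line_search] //.
have [_ /(_ c (open_loop_step_in01 t))] := line_search i eta x w t (z t) s.
by move/le_trans; apply.
Qed.

Lemma cg_phi_seq_rate y t : X y -> phi (z t.+1) - phi y <= 4 * C / (t.+1%:R + 2).
Proof.
move=> Xy.
have phi_sub_le_gap u : phi u - phi y <= fw_gap i x w eta u.
  have := cg_phi_le_gap i x w eta u Xy.
  have : 0 <= eta / 2 * sqnorm (y - u) by rewrite mulr_ge0 ?divr_ge0 ?sqnorm_ge0.
  lra.
elim: t => [|t IH].
  have := cg_seq_descent 0; have := phi_sub_le_gap (z 0).
  rewrite add0r divff ?expr1n ?mul1r //.
  have : C <= 4 * C / (1%:R + 2) by rewrite ler_pdivlMr //; move: C_ge0; lra.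
  lra.
have := cg_seq_descent t.+1; have := phi_sub_le_gap (z t.+1).
move: IH; set u := (t.+1%:R : R).
have -> : (t.+2%:R : R) + 2 = u + 3 by rewrite /u -natr1; ring.
set c := 2 / (u + 2); move: (open_loop_rate_step (ler0n _ t.+1) C_ge0); rewrite -/u -/c.
have /andP [c_ge0 c_le1] : 0 <= c <= 1 := open_loop_step_in01 t.+1.
move=> rate_step IH gap_ge descent.
have : c * (phi (z t.+1) - phi y) <= c * gap t.+1 by rewrite ler_wpM2l.
have : (1 - c) * (phi (z t.+1) - phi y) <= (1 - c) * (4 * C / (u + 2)).
  by rewrite ler_wpM2l ?subr_ge0.
lra.
Qed.

Lemma cg_seq_descent_window (a t : nat) (e : R) : (a <= t < 2 * a)%N -> 0 < e ->
  e < gap t -> phi (z t.+1) <= phi (z t) - (e / (a%:R + 1) - 4 * C / (a%:R + 2) ^+ 2).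
Proof.
move=> /andP [le_at lt_t2a] e_gt0 gap_gt; have := cg_seq_descent t.
set A := (a%:R : R); set c := 2 / (t%:R + 2).
have /andP [c_ge0 _] : 0 <= c <= 1 := open_loop_step_in01 t.
have [A_ge0 tA tA2] : [/\ 0 <= A, A <= t%:R & (t%:R : R) <= 2 * A].
  by rewrite ler0n ler_nat -natrM ler_nat; split => //; lia.
have t2_gt0 : 0 < (t%:R + 2 : R) by apply: ltr_wpDl.
have c_ge : 1 / (A + 1) <= c.
  rewrite /c ler_pdivrMr; last lra.
  by rewrite mulrC mulrA ler_pdivlMr //; lra.
have c_le : c <= 2 / (A + 2).
  by rewrite /c ler_pdivrMr // mulrC mulrA ler_pdivlMr //; lra.
have : e / (A + 1) <= c * e by rewrite mulrC ler_wpM2r ?(ltW e_gt0) // -[_^-1]mul1r.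
have : c * e <= c * gap t by rewrite ler_wpM2l // (ltW gap_gt).
have : c ^+ 2 * C <= 4 * C / (A + 2) ^+ 2.
  have -> : 4 * C / (A + 2) ^+ 2 = (2 / (A + 2)) ^+ 2 * C by field; rewrite gt_eqF //; lra.
  rewrite ler_wpM2r // lerXn2r ?nnegrE //; lra.
lra.
Qed.

(* If every gap on the window [a, 2a) exceeded e, phi would decrease on it by
   a (e / (a + 1) - 4 C / (a + 2)^2), more than the rate bound 4 C / (a + 2)
   allows above the value of phi at z (2a). *)
Lemma cg_gap_le_within (a : nat) (e : R) : (1 <= a)%N -> 0 < e ->
  16 * C < (a%:R + 2) * e -> exists2 t, (t < 2 * a)%N & gap t <= e.
Proof.
move=> a_ge1 e_gt0 a_large.
case: (pselect (exists2 t, (t < 2 * a)%N & gap t <= e)) => // no_small_gap.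
have gaps_gt t : (t < 2 * a)%N -> e < gap t.
  by move=> lt_t2a; rewrite ltNge; apply/negP => small; apply: no_small_gap; exists t.
set A := (a%:R : R); set delta := e / (A + 1) - 4 * C / (A + 2) ^+ 2.
have window j : (j <= a)%N -> phi (z (a + j)) <= phi (z a) - j%:R * delta.
  elim: j => [|j IH] le_ja; first by rewrite addn0 mul0r subr0.
  have := IH (ltnW le_ja); rewrite addnS -natr1.
  have := cg_seq_descent_window (a := a) (t := a + j) ltac:(lia) e_gt0
    (gaps_gt (a + j) ltac:(lia)).
  rewrite -/A -/delta; lra.
have := cg_phi_seq_rate (a.-1) (cg_seq_in (a + a)); rewrite prednK // -/A => rate.
have := window a (leqnn a); rewrite -/A => descent.
have : (A + 2) * e <= 16 * C.
  by apply: window_descent_le; rewrite ?ler1n // -/delta; lra.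
lra.
Qed.

Lemma cg_gap_le_early (e : R) : 0 < e ->
  exists2 t, (t.+1)%:R <= 32 * C / e + 2 & gap t <= e.
Proof.
move=> e_gt0.
have /exists_nat_gt_le [a [a_gt0 a_gt a_le]] : 0 <= 16 * C / e.
  exact: divr_ge0 (mulr_ge0 _ C_ge0) (ltW e_gt0).
have a_large : 16 * C < (a%:R + 2) * e.
  move: a_gt; rewrite ltr_pdivrMr // => lt_a.
  by apply: lt_le_trans lt_a _; rewrite ler_wpM2r ?(ltW e_gt0) // lerDl.
have [t lt_t2a small] := cg_gap_le_within a_gt0 e_gt0 a_large.
exists t => //; apply: le_trans (_ : (2 * a)%:R <= _); first by rewrite ler_nat.
have -> : 32 * C / e = 2 * (16 * C / e) by ring.
rewrite natrM; lra.
Qed.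

Lemma cg_stops_at_le (e : R) T : 0 < e ->
  cg_stops_at i (gf i) lo gam x w eta e z0 T -> (T.+1)%:R <= 32 * C / e + 2.
Proof.
move=> e_gt0 [_ gaps_gt]; have [t t_le small] := cg_gap_le_early e_gt0.
apply: le_trans t_le; rewrite ler_nat ltnS leqNgt; apply/negP => /gaps_gt.
by rewrite cg_gapE ltNge small.
Qed.

End Iterates.
End FrankWolfe.

Section PrimalDualPotential.
Variables (R : realType) (m d : nat) (L : 'M[R]_m) (lam : R).
Variables (F : 'M[R]_(m, d) -> R) (xs ys : nat -> 'M[R]_(m, d)) (xstar : 'M[R]_(m, d)).
Variables (e : R) (N : nat).
Hypotheses (lam_gt0 : 0 < lam) (L_sym : L^T = L) (L_xstar : L *m xstar = 0).
Hypothesis L_le : forall A : 'M[R]_(m, d), sqnorm (L *m A) <= lam ^+ 2 * sqnorm A.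
Hypothesis ys_rec : forall k, (1 <= k <= N)%N ->
  ys k = ys k.-1 + lam^-1 *: (L *m (xs k.-1 - xs (k - 2) + xs k.-1)).
Hypothesis xs_prox : forall k, (1 <= k <= N)%N ->
  mxdot (L *m ys k) (xs k) + F (xs k) + lam * sqnorm (xs k - xs k.-1)
    + lam * sqnorm (xstar - xs k)
  <= mxdot (L *m ys k) xstar + F xstar + lam * sqnorm (xstar - xs k.-1) + e.

Definition dcgs_potential k :=
  lam * sqnorm (xstar - xs k) + lam / 2 * sqnorm (ys k)
  + mxdot (ys k) (L *m (xs k - xs k.-1)) + lam / 2 * sqnorm (xs k - xs k.-1).

Lemma mxdot_mulmx_Young (y D : 'M[R]_(m, d)) :
  2 * mxdot y (L *m D) <= lam * sqnorm y + lam * sqnorm D.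
Proof.
apply: le_trans (mxdot_Young y (L *m D) lam_gt0) _; rewrite lerD2l.
apply: le_trans (_ : lam^-1 * (lam ^+ 2 * sqnorm D) <= _).
  by rewrite ler_wpM2l ?invr_ge0 ?(ltW lam_gt0).
by rewrite mulrA expr2 mulrA mulVf ?mul1r // gt_eqF.
Qed.

Lemma dcgs_potential_ge0 k : 0 <= dcgs_potential k.
Proof.
have := mxdot_mulmx_Young (- ys k) (xs k - xs k.-1).
rewrite mxdotNl sqnormN /dcgs_potential.
have : 0 <= lam * sqnorm (xstar - xs k) by rewrite mulr_ge0 ?sqnorm_ge0 ?(ltW lam_gt0).
lra.
Qed.

Lemma dcgs_potential_step j : (j < N)%N ->
  F (xs j.+1) - F xstar <= dcgs_potential j - dcgs_potential j.+1 + e.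
Proof.
move=> lt_jN; have := xs_prox (k := j.+1) ltac:(lia).
have := ys_rec (k := j.+1) ltac:(lia); rewrite /dcgs_potential !succnK subSS subn1.
set x := xs j.+1; set xp := xs j; set xpp := xs j.-1; set y := ys j.+1; set yp := ys j.
move=> y_rec prox.
have L_xp_step : L *m (xp - xpp + xp) = lam *: (y - yp).
  by rewrite y_rec [yp + _]addrC addrK scalerA mulfV ?scale1r // gt_eqF.
have Ly_x : mxdot (L *m y) x =
    lam * mxdot y (y - yp) - mxdot y (L *m (xp - xpp)) + mxdot y (L *m (x - xp)).
  rewrite mxdot_mulmx_sym //.
  have -> : L *m x = L *m (xp - xpp + xp) - L *m (xp - xpp) + L *m (x - xp).
    by rewrite -mulmxBr -mulmxDr [xp - xpp + xp]addrC addrK [xp + _]addrC subrK.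
  by rewrite L_xp_step (mxdotDr y (_ + _)) (mxdotDr y (lam *: _)) mxdotNr mxdotZr.
have Ly_xstar : mxdot (L *m y) xstar = 0 by rewrite mxdot_mulmx_sym // L_xstar mxdot0r.
have y_sq : 2 * mxdot y (y - yp) = sqnorm y - sqnorm yp + sqnorm (y - yp).
  by rewrite sqnormB mxdotBr sqnormE; ring.
have y_split : mxdot y (L *m (xp - xpp)) =
    mxdot yp (L *m (xp - xpp)) + mxdot (y - yp) (L *m (xp - xpp)).
  by rewrite mxdotBl; ring.
have := mxdot_mulmx_Young (y - yp) (xp - xpp).
have : 0 <= lam / 2 * sqnorm (x - xp).
  by rewrite mulr_ge0 ?divr_ge0 ?sqnorm_ge0 ?(ltW lam_gt0).
have : lam * mxdot y (y - yp) = lam / 2 * (2 * mxdot y (y - yp)) by field.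
rewrite y_sq; lra.
Qed.

Lemma dcgs_sum_objective_le :
  \sum_(1 <= k < N.+1) (F (xs k) - F xstar)
  <= lam * sqnorm (xstar - xs 0) + lam / 2 * sqnorm (ys 0) + N%:R * e.
Proof.
have partial n : (n <= N)%N -> \sum_(1 <= k < n.+1) (F (xs k) - F xstar)
    <= dcgs_potential 0 - dcgs_potential n + n%:R * e.
  elim: n => [|n IH] le_nN; first by rewrite big_geq // subrr mul0r addr0.
  rewrite big_nat_recr //= -natr1.
  have := IH (ltnW le_nN); have := dcgs_potential_step le_nN; lra.
have := partial N (leqnn N); have := dcgs_potential_ge0 N.
by rewrite /dcgs_potential subrr mulmx0 mxdot0r sqnorm0 mulr0 !addr0; lra.
Qed.

End PrimalDualPotential.

Section SeparableObjective.
Variables (R : realType) (m d : nat) (X : set 'rV[R]_d) (f : 'I_m -> 'rV[R]_d -> R)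
  (gf : 'I_m -> 'rV[R]_d -> 'rV[R]_d) (l : R) (lo : 'rV[R]_d -> 'rV[R]_d).
Hypothesis f_cvx_smooth : forall i, strcvx_smooth 0 l (f i) (gf i).
Hypothesis lo_X : linear_oracle X lo.

Lemma Fobj_inexact_prox (W Xp Xk Z : 'M[R]_(m, d)) (eta e : R) : inXm X Z ->
  (forall i, fw_gap gf lo i (row i Xp) (row i W) eta (row i Xk) <= e) ->
  mxdot W Xk + Fobj f Xk + eta / 2 * sqnorm (Xk - Xp) + eta / 2 * sqnorm (Z - Xk)
  <= mxdot W Z + Fobj f Z + eta / 2 * sqnorm (Z - Xp) + m%:R * e.
Proof.
move=> Z_X gaps_le.
have rowwise : \sum_i (cg_phi (f i) (row i Xp) (row i W) eta (row i Xk)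
                      + eta / 2 * sqnorm (row i Z - row i Xk))
    <= \sum_i (cg_phi (f i) (row i Xp) (row i W) eta (row i Z) + e).
  apply: ler_sum => i _; apply: le_trans (cg_phi_le_gap f_cvx_smooth lo_X _ _ _ _ _ (Z_X i)) _.
  by rewrite lerD2l.
move: rowwise; rewrite /cg_phi !big_split /= -!mulr_sumr sumr_const card_ord -mulr_natl.
rewrite !(mxdot_rows W) /Fobj !sqnormB_rows.
under eq_bigr do rewrite dotvE.
under [X in _ <= X + _ + _ + _]eq_bigr do rewrite dotvE.
lra.
Qed.

Lemma Fobj_mean_le (xs : nat -> 'M[R]_(m, d)) (N : nat) : (1 <= N)%N ->
  N%:R * Fobj f (dcgs_output (fun _ => 1) N xs) <= \sum_(1 <= k < N.+1) Fobj f (xs k).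
Proof.
move=> N_gt0; set xb := dcgs_output _ N xs.
pose G : 'M[R]_(m, d) := \matrix_(i, j) gf i (row i xb) 0 j.
have linearization A : Fobj f xb + mxdot G (A - xb) <= Fobj f A.
  rewrite /Fobj mxdot_rows -big_split /=; apply: ler_sum => i _.
  have -> : row i G = gf i (row i xb) by apply/rowP => j; rewrite !mxE.
  by rewrite linearB; apply: cvx_linearization_le.
have sum_xs : \sum_(1 <= k < N.+1) xs k = xb *+ N.
  rewrite /xb /dcgs_output sumr_const_nat subSS subn0.
  under [X in _ = _ *: X *+ _]eq_bigr do rewrite scale1r.
  by rewrite -scaler_nat scalerA mulfV ?scale1r // pnatr_eq0 -lt0n.
apply: le_trans (ler_sum_nat (fun k _ => linearization (xs k))).
rewrite big_split /= -mxdot_sumr sumrB sum_xs !sumr_const_nat subSS subn0 subrr.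
by rewrite mxdot0r addr0 mulr_natl.
Qed.

End SeparableObjective.

Lemma dcgs_run_exists (R : realType) (m d : nat) (L : 'M[R]_m)
    (gf : 'I_m -> 'rV[R]_d -> 'rV[R]_d) (lo : 'rV[R]_d -> 'rV[R]_d)
    (gam : step_rule R m d) (zinit : nat -> 'I_m -> 'rV[R]_d)
    (alpha tau eta : nat -> R) (e : nat -> 'I_m -> R) (N : nat) (x0 y0 : 'M[R]_(m, d)) :
  (forall k i x w, exists t, cg_gap i (gf i) lo gam x w (eta k) (zinit k i) t <= e k i) ->
  exists xs ys T, dcgs_run L gf lo gam zinit alpha tau eta e N x0 y0 xs ys T.
Proof.
move=> cg_stops.
pose stop k i x w := ex_minn (cg_stops k i x w).
pose cg k i x w := cg_seq i (gf i) lo gam x w (eta k) (zinit k i) (stop k i x w).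
pose step k (st : 'M[R]_(m, d) * 'M[R]_(m, d) * 'M[R]_(m, d)) :=
  let: (xp, xpp, yp) := st in
  let y := yp + (tau k)^-1 *: (L *m (alpha k *: (xp - xpp) + xp)) in
  (\matrix_(i, j) cg k i (row i xp) (row i (L *m y)) 0 j, xp, y).
pose st := fix st k := if k is k'.+1 then step k (st k') else (x0, x0, y0).
pose xs k := (st k).1.1; pose ys k := (st k).2.
exists xs, ys, (fun k i => stop k i (row i (xs k.-1)) (row i (L *m ys k))).
have st_prev k : (st k).1.2 = xs k.-1.
  by case: k => [|k] //; rewrite /xs /=; case: (st k) => [[]].
do 2!split => //; case=> [//|k] _ /=; rewrite !subSS !subn0.
rewrite subn1 -/(xs k.-1) -st_prev /ys /xs /=.
case: (st k) => [[xp xpp] yp] /=; split=> // i.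
split; last by apply/rowP => j; rewrite !mxE.
rewrite /stop; case: ex_minnP => t gap_le t_min; split=> // t' lt_t't.
by rewrite ltNge; apply/negP => /t_min; rewrite leqNgt lt_t't.
Qed.

Section ConstantParameters.
Variables (R : realType) (m d : nat) (X : set 'rV[R]_d) (f : 'I_m -> 'rV[R]_d -> R)
  (gf : 'I_m -> 'rV[R]_d -> 'rV[R]_d) (l : R) (lo : 'rV[R]_d -> 'rV[R]_d)
  (L : 'M[R]_m) (gam : step_rule R m d) (zinit : nat -> 'I_m -> 'rV[R]_d)
  (e : R) (N : nat) (x0 y0 : 'M[R]_(m, d)).
Hypotheses (f_cvx_smooth : forall i, strcvx_smooth 0 l (f i) (gf i))
  (lo_X : linear_oracle X lo) (L_sym : L^T = L) (nL_gt0 : 0 < specnorm L).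

Local Notation nL := (specnorm L).
Local Notation run := (dcgs_run L gf lo gam zinit (fun _ => 1) (fun _ => nL)
  (fun _ => 2 * nL) (fun _ _ => e) N x0 y0).

Lemma dcgs_objective_le xs ys T xstar : run xs ys T -> (1 <= N)%N ->
  inXm X xstar -> L *m xstar = 0 ->
  N%:R * (Fobj f (dcgs_output (fun _ => 1) N xs) - Fobj f xstar)
  <= 3 / 2 * nL * Num.max (sqnorm (x0 - xstar)) (sqnorm y0) + N%:R * (m%:R * e).
Proof.
move=> [xs0 [ys0 run_k]] N_gt0 xstar_X L_xstar.
have ys_rec k : (1 <= k <= N)%N ->
    ys k = ys k.-1 + nL^-1 *: (L *m (xs k.-1 - xs (k - 2)%N + xs k.-1)).
  by move=> /run_k [+ _]; rewrite scale1r subn1.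
have xs_prox k : (1 <= k <= N)%N ->
    mxdot (L *m ys k) (xs k) + Fobj f (xs k) + nL * sqnorm (xs k - xs k.-1)
      + nL * sqnorm (xstar - xs k)
    <= mxdot (L *m ys k) xstar + Fobj f xstar + nL * sqnorm (xstar - xs k.-1) + m%:R * e.
  move=> /run_k [_ cg_k]; rewrite -subn1.
  have -> : nL = 2 * nL / 2 by rewrite mulrC mulKf ?pnatr_eq0.
  apply: Fobj_inexact_prox f_cvx_smooth lo_X _ _ _ _ _ _ xstar_X _ => i.
  by have [[gap_le _] ->] := cg_k i; rewrite -cg_gapE.
have := dcgs_sum_objective_le nL_gt0 L_sym L_xstar (@sqnorm_mulmx_le _ _ L d) ys_rec xs_prox.
have := Fobj_mean_le f_cvx_smooth xs N_gt0.
have : nL * sqnorm (x0 - xstar) + nL / 2 * sqnorm y0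
    <= 3 / 2 * nL * Num.max (sqnorm (x0 - xstar)) (sqnorm y0).
  have [x0_le y0_le] : sqnorm (x0 - xstar) <= Num.max (sqnorm (x0 - xstar)) (sqnorm y0)
      /\ sqnorm y0 <= Num.max (sqnorm (x0 - xstar)) (sqnorm y0).
    by rewrite !le_max !lexx orbT.
  have := ler_wpM2l (ltW nL_gt0) x0_le; have := ler_wpM2l (ltW nL_gt0) y0_le; lra.
rewrite xs0 ys0 sumrB sumr_const_nat subSS subn0 (sqnormBC xstar) -mulr_natl; lra.
Qed.

Hypotheses (X_convex : convex_set X) (gam_admissible : admissible_step f gam).
Hypotheses (zinit_X : forall k i, X (zinit k i)) (e_gt0 : 0 < e).
Variable Dl : R.
Hypothesis X_sqdiam : forall a b, X a -> X b -> sqnorm (a - b) <= Dl.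
Hypothesis l_2nL_ge0 : 0 <= l + 2 * nL.

Let two_nL_ge0 : 0 <= 2 * nL.
Proof. by rewrite mulr_ge0 // ltW. Qed.

Lemma dcgs_cg_terminates k i x w :
  exists t, cg_gap i (gf i) lo gam x w (2 * nL) (zinit k i) t <= e.
Proof.
have [t _ gap_le] := cg_gap_le_early f_cvx_smooth lo_X X_convex gam_admissible X_sqdiam
  i x w two_nL_ge0 l_2nL_ge0 (zinit_X k i) e_gt0.
by exists t; rewrite cg_gapE.
Qed.

Lemma dcgs_lo_calls_le xs ys T i : run xs ys T ->
  (lo_calls T N i)%:R <= N%:R * (32 * ((l + 2 * nL) / 2 * Dl) / e + 2).
Proof.
move=> [_ [_ run_k]]; rewrite /lo_calls natr_sum; set c := (X in _ <= _ * X).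
have -> : N%:R * c = \sum_(1 <= k < N.+1) c by rewrite sumr_const_nat subn1 mulr_natl.
apply: ler_sum_nat => k k_range; rewrite /c.
have [_ /(_ i) [stops _]] := run_k k k_range.
apply: (cg_stops_at_le f_cvx_smooth lo_X X_convex gam_admissible X_sqdiam
  two_nL_ge0 l_2nL_ge0 (zinit_X k i) e_gt0 stops).
Qed.

End ConstantParameters.

(* The left-hand side equals 16 (l + 2 nL) Dl m N^2 / (nL D) + 2 N. *)
Lemma lo_budget_le (R : realType) (m N nL l D Dl eps : R) :
  1 <= m -> 0 <= l -> 1 <= nL -> 0 < D -> 0 <= Dl -> 0 < eps -> eps <= nL ->
  0 < N -> N <= 7 / 2 * (nL * D / eps) ->
  N * (32 * ((l + 2 * nL) / 2 * Dl) / (nL * D / (m * N)) + 2)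
  <= (392 * Dl + 7) * (m * nL * (l + nL) * D / eps ^+ 2).
Proof.
move=> m_ge1 l_ge0 nL_ge1 D_gt0 Dl_ge0 eps_gt0 eps_le N_gt0 N_le.
have [m0 nL0 D0 eps0 N0] : [/\ m != 0, nL != 0, D != 0, eps != 0 & N != 0].
  by split; rewrite gt_eqF //; lra.
set K := nL * D / eps in N_le *; set A := m * K / eps.
have [m_ge0 nL_ge0] : 0 <= m /\ 0 <= nL by split; lra.
have A_ge0 : 0 <= A.
  by rewrite /A /K !mulr_ge0 ?invr_ge0 ?(ltW D_gt0) ?(ltW eps_gt0).
have -> : N * (32 * ((l + 2 * nL) / 2 * Dl) / (nL * D / (m * N)) + 2)
    = 16 * ((l + 2 * nL) * Dl) * (m * N ^+ 2 / (nL * D)) + 2 * N.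
  by field; rewrite D0 nL0 N0 m0.
have -> : m * nL * (l + nL) * D / eps ^+ 2 = (l + nL) * A by rewrite /A /K; field.
have N2_le : m * N ^+ 2 / (nL * D) <= 49 / 4 * A.
  have -> : 49 / 4 * A = m * (7 / 2 * K) ^+ 2 / (nL * D).
    by rewrite /A /K; field; rewrite D0 nL0 eps0.
  rewrite ler_pM2r ?invr_gt0 ?mulr_gt0 //; last lra.
  by rewrite ler_wpM2l ?lerXn2r ?nnegrE //; lra.
have : 16 * ((l + 2 * nL) * Dl) * (m * N ^+ 2 / (nL * D))
    <= 16 * ((l + 2 * nL) * Dl) * (49 / 4 * A).
  by rewrite ler_wpM2l // mulr_ge0 ?mulr_ge0 //; lra.
have : (l + 2 * nL) * Dl * A <= 2 * ((l + nL) * Dl * A).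
  have := mulr_ge0 (mulr_ge0 l_ge0 Dl_ge0) A_ge0.
  lra.
have : K <= (l + nL) * A.
  have -> : (l + nL) * A = (l + nL) * m / eps * K by rewrite /A; field.
  rewrite -[K in K <= _]mul1r ler_pM2r ?divr_gt0 ?mulr_gt0 //; last lra.
  by rewrite ler_pdivlMr // mul1r; nra.
nra.
Qed.

Theorem corollary1 (R : realType) :
  exists C1 : R, 0 < C1 /\
  forall (d : nat) (X : set 'rV[R]_d),
    (exists x, X x) -> convex_set X -> compact_set X ->
  exists C2 : R, 0 < C2 /\
  forall (m : nat) (E : rel 'I_m) (f : 'I_m -> 'rV[R]_d -> R)
         (gf : 'I_m -> 'rV[R]_d -> 'rV[R]_d) (l : R)
         (lo : 'rV[R]_d -> 'rV[R]_d) (x0 y0 xstar : 'M[R]_(m, d)),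
    (1 < m)%N ->
    connected_graph E ->
    (forall i, strcvx_smooth 0 l (f i) (gf i)) ->
    linear_oracle X lo ->
    inXm X x0 ->
    optimal_sol X (laplacian R E) f xstar ->
    let nL := specnorm (laplacian R E) in
    let D := Num.max (sqnorm (x0 - xstar)) (sqnorm y0) in
    0 < D ->
  exists eps0 : R, 0 < eps0 /\
  forall eps : R, 0 < eps <= eps0 ->
  exists N : nat, (1 <= N)%N /\
    (2 * N)%:R <= C1 * (nL * D / eps) /\
    forall (zinit : nat -> 'I_m -> 'rV[R]_d) (gam : step_rule R m d),
      (forall k i, X (zinit k i)) ->
      admissible_step f gam ->
      let runP := dcgs_run (laplacian R E) gf lo gam zinit
                    (fun _ => 1) (fun _ => nL) (fun _ => 2 * nL)
                    (fun _ _ => nL * D / (m%:R * N%:R)) N x0 y0 in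
      (exists xs ys T, runP xs ys T) /\
      forall xs ys T, runP xs ys T ->
        (forall i, (lo_calls T N i)%:R
                   <= C2 * (m%:R * nL * (l + nL) * D / eps ^+ 2)) /\
        Fobj f (dcgs_output (fun _ => 1) N xs) - Fobj f xstar <= eps.
Proof.
exists 7; split => // d X _ X_convex /compact_sqnorm_bounded [Dl [Dl_ge0 X_sqdiam]].
exists (392 * Dl + 7); split; first lra.
move=> m E f gf l lo x0 y0 xstar m_gt1 E_graph f_cvx_smooth lo_X _ [xstar_X [L_xstar _]].
move=> nL D D_gt0; have nL_ge1 : 1 <= nL := specnorm_laplacian_ge1 R m_gt1 E_graph.
have L_sym := laplacian_sym R E_graph.2.1.
have d_gt0 : (0 < d)%N by move: D_gt0; rewrite lt_max => /orP [] /sqnorm_gt0_width.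
have l_ge0 : 0 <= l := strcvx_smooth_le d_gt0 (f_cvx_smooth (Ordinal (ltnW m_gt1))).
exists (Num.min (nL * D) nL); split; first by rewrite lt_min mulr_gt0 //; lra.
move=> eps /andP [eps_gt0]; rewrite le_min => /andP [eps_le_nLD eps_le_nL].
have K_ge1 : 1 <= nL * D / eps by rewrite ler_pdivlMr // mul1r.
have /exists_nat_gt_le [N [N_gt0 N_gt N_le]] : 0 <= 5 / 2 * (nL * D / eps) by lra.
exists N; split => //; split; first by rewrite natrM; lra.
move=> zinit gam zinit_X gam_admissible runP.
have e_gt0 : 0 < nL * D / (m%:R * N%:R).
  by rewrite divr_gt0 ?mulr_gt0 ?ltr0n ?(ltnW m_gt1) // (lt_le_trans ltr01 nL_ge1).
have [nL_gt0 l_2nL_ge0] : 0 < nL /\ 0 <= l + 2 * nL by split; lra.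
split.
  apply: dcgs_run_exists => k i x w.
  exact: (dcgs_cg_terminates f_cvx_smooth lo_X nL_gt0 X_convex gam_admissible zinit_X
    e_gt0 X_sqdiam l_2nL_ge0).
move=> xs ys T run; split => [i|].
  apply: le_trans (dcgs_lo_calls_le f_cvx_smooth lo_X nL_gt0 X_convex gam_admissible
    zinit_X e_gt0 X_sqdiam l_2nL_ge0 i run) _.
  by apply: lo_budget_le; rewrite ?ler1n ?ltr0n ?(ltnW m_gt1) // -/nL; lra.
have N_gt0R : (0 : R) < N%:R by rewrite ltr0n.
have := dcgs_objective_le f_cvx_smooth lo_X L_sym nL_gt0 run N_gt0 xstar_X L_xstar.
have -> : N%:R * (m%:R * (nL * D / (m%:R * N%:R))) = nL * D.
  by field; rewrite !pnatr_eq0 -!lt0n N_gt0 (ltnW m_gt1).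
have : 5 / 2 * (nL * D) < N%:R * eps by move: N_gt; rewrite mulrA ltr_pdivrMr.
rewrite -/nL -/D => N_eps_gt objective_le; rewrite -(ler_pM2l N_gt0R); lra.
Qed.
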